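(* Let $\sigma$ be any argumentation semantics whose extensions are maximal conflict-free sets (w.r.t. set inclusion). For every two argumentation frameworks $AF=(AR,Attacks)$, $AF'=(AR',Attacks')$ with $AF\preceq_N AF'$: if for all $E\in\sigma(AF)$ and all $E'\in\sigma(AF')$ we have $E\subseteq E'$, then for all $E\in\sigma(AF)$ and all $E'\in\sigma(AF')$ we have $E'\not\subseteq AR$ or $E'=E$.
   Context: An argumentation framework is a pair $(AR,Attacks)$ with $AR$ a finite set and $Attacks\subseteq AR\times AR$; $a$ attacks $b$ iff $(a,b)\in Attacks$. A set $S$ is conflict-free iff no element of $S$ attacks an element of $S$. An argumentation semantics $\sigma$ assigns to each argumentation framework a set $\sigma(AF)$ of subsets of $AR$; ''$\sigma$'s extensions are maximal conflict-free sets'' means that for every $AF$, every $E\in\sigma(AF)$ is a $\subseteq$-maximal conflict-free subset of the argument set of $AF$. $AF\preceq_N AF'$ (normal expansion) iff $AR\subseteq AR'$, $Attacks\subseteq Attacks'$ and no $(a,b)\in Attacks'\setminus Attacks$ has both $a,b\in AR$. *)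

From HB Require Import structures.
From mathcomp Require Import all_boot.
From mathcomp Require Import finmap.
Set Implicit Arguments. Unset Strict Implicit. Unset Printing Implicit Defensive.
Local Open Scope fset_scope.

Record AF (U : choiceType) := mkAF {
  AR : {fset U};
  Attacks : {fset (U * U)};
  Attacks_wf : forall a b, (a, b) \in Attacks -> a \in AR /\ b \in AR
}.

Definition attacks (U : choiceType) (F : AF U) (a b : U) : Prop :=
  (a, b) \in Attacks F.

Definition semantics (U : choiceType) := AF U -> {fset U} -> Prop.

Definition conflict_free (U : choiceType) (F : AF U) (S : {fset U}) : Prop :=
  forall a b, a \in S -> b \in S -> ~ attacks F a b.

Definition maximal_conflict_free (U : choiceType) (F : AF U) (S : {fset U}) : Prop :=
  [/\ S `<=` AR F, conflict_free F S &
      forall T : {fset U}, S `<=` T -> T `<=` AR F -> conflict_free F T -> T = S].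

Definition extensions_maximal_cf (U : choiceType) (sigma : semantics U) : Prop :=
  forall (F : AF U) (E : {fset U}), sigma F E -> maximal_conflict_free F E.

Definition normal_expansion (U : choiceType) (F F' : AF U) : Prop :=
  [/\ AR F `<=` AR F', Attacks F `<=` Attacks F' &
      forall a b, (a, b) \in Attacks F' -> (a, b) \notin Attacks F ->
        ~ (a \in AR F /\ b \in AR F)].

From HB Require Import structures.
From mathcomp Require Import all_boot.
From mathcomp Require Import finmap.
Local Open Scope fset_scope.

(* If E' lies inside AR, it is conflict-free in AF as well, since AF' only adds
   attacks; it contains the extension E, so the maximality of E forces E' = E.
   Of normal expansion only the inclusion of the attack relations is needed. *)

Lemma conflict_free_subAttacks (U : choiceType) (F F' : AF U) (S : {fset U}) :
  Attacks F `<=` Attacks F' -> conflict_free F' S -> conflict_free F S.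
Proof.
move=> /fsubsetP subAtt cfS a b aS bS abF.
exact: (cfS a b aS bS (subAtt _ abF)).
Qed.

Theorem proposition52 (U : choiceType) (sigma : semantics U) :
  extensions_maximal_cf sigma ->
  forall F F' : AF U, normal_expansion F F' ->
  (forall E E' : {fset U}, sigma F E -> sigma F' E' -> E `<=` E') ->
  forall E E' : {fset U}, sigma F E -> sigma F' E' ->
    ~ (E' `<=` AR F) \/ E' = E.
Proof.
move=> maxcf F F' [_ subAtt _] subExt E E' sigE sigE'.
have [E'AR | /negP E'notAR] := boolP (E' `<=` AR F); last by left.
have [_ _ maxE] := maxcf _ _ sigE.
have [_ cfE' _] := maxcf _ _ sigE'.
right; apply: maxE (subExt _ _ sigE sigE') E'AR _.
exact: conflict_free_subAttacks subAtt cfE'.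
Qed.
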